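(* Consider a three-phase system consisting of a liquid (index $l$), its vapor (index $v$) and a gas (index $g$). Each phase $k\in\{l,g,v\}$ has an extensive entropy $S_k:(\mathbb R^+)^3\to\mathbb R\cup\{-\infty\}$, $W_k=(M_k,V_k,E_k)\mapsto S_k(W_k)$, satisfying: (i) $C_k:=\{W\in(\mathbb R^+)^3: S_k(W)>-\infty\}$ is a non-empty closed convex set; (ii) $S_k$ is concave; (iii) $S_k$ is positively homogeneous of degree 1 ($S_k(\lambda W)=\lambda S_k(W)$ for all $\lambda>0$, $W\in C_k$); (iv) $S_k$ is upper semi-continuous; (v) $S_k$ is $\mathcal C^2$ on $C_k$ with $\partial S_k/\partial E>0$. Let $\Sigma(W_l,W_g,W_v)=S_l(W_l)+S_g(W_g)+S_v(W_v)$. Define the equilibrium entropy without phase transition, for $(M,V,E)\in(\mathbb R^+)^3$ and fixed $M_l,M_g\ge 0$ with $M_v:=M-M_l-M_g\ge 0$, by $$S_{NPT}(M,V,E,M_l,M_g)=\max\Big\{\Sigma(W_l,W_g,W_v)\;:\; W_k=(M_k,V_k,E_k)\in C_k,\ E=E_l+E_g+E_v,\ V=V_l+V_v,\ V_g=V_v\Big\},$$ and the equilibrium entropy with phase transition, for fixed $M_g\ge 0$, by $$S_{PT}(M,V,E,M_g)=\max\Big\{\Sigma(W_l,W_g,W_v)\;:\; W_k\in C_k,\ M-M_g=M_l+M_v,\ E=E_l+E_g+E_v,\ V=V_l+V_v,\ V_g=V_v\Big\}.$$ Then $S_{NPT}$ (resp. $S_{PT}$) is a positively homogeneous of degree 1,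 concave function of its arguments.
   Context: The constraint $V=V_l+V_v$, $V_g=V_v$ expresses that the liquid is immiscible with the gaseous phases while the vapor and the gas are miscible (share the same volume). The mass $M_g$ of gas is fixed (no mass transfer with the gas). *)

From HB Require Import structures.
From mathcomp Require Import all_boot all_order all_algebra.
From mathcomp Require Import all_classical all_reals all_analysis.
Set Implicit Arguments. Unset Strict Implicit. Unset Printing Implicit Defensive.
Import Order.TTheory GRing.Theory Num.Theory.
Import numFieldNormedType.Exports.
Local Open Scope classical_set_scope.
Local Open Scope ring_scope.

Section Defs.
Variable R : realType.

Definition Mof (W : 'rV[R]_3) : R := W ord0 0.
Definition Vof (W : 'rV[R]_3) : R := W ord0 1.
Definition Eof (W : 'rV[R]_3) : R := W ord0 2.

Definition ebasis (i : 'I_3) : 'rV[R]_3 := delta_mx ord0 i.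

Definition orthant : set 'rV[R]_3 := [set W | forall i, 0 <= W ord0 i].

Definition convex_set3 (C : set 'rV[R]_3) : Prop :=
  forall x y (t : R), C x -> C y -> 0 <= t <= 1 -> C (t *: x + (1 - t) *: y).

Definition effdom (S : 'rV[R]_3 -> \bar R) : set 'rV[R]_3 :=
  [set W | orthant W /\ (-oo < S W)%E].

Definition C2_on (U : set 'rV[R]_3) (f : 'rV[R]_3 -> R) : Prop :=
  forall x, U x -> forall i j : 'I_3,
    [/\ derivable f x (ebasis i),
        derivable ('D_(ebasis i) f) x (ebasis j),
        {for x, continuous f},
        {for x, continuous ('D_(ebasis i) f)} &
        {for x, continuous ('D_(ebasis j) ('D_(ebasis i) f))}].

Record entropy_axioms (S : 'rV[R]_3 -> \bar R) : Prop := {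
  ent_not_pinfty : forall W, orthant W -> S W != +oo%E;
  ent_dom_nonempty : effdom S !=set0;
  ent_dom_closed : closed (effdom S);
  ent_dom_convex : convex_set3 (effdom S);
  ent_concave : forall x y (t : R), orthant x -> orthant y -> 0 < t < 1 ->
     (t%:E * S x + (1 - t)%:E * S y <= S (t *: x + (1 - t) *: y)%R)%E;
  ent_homog : forall (lam : R) W, 0 < lam -> effdom S W ->
     S (lam *: W)%R = (lam%:E * S W)%E;
  ent_usc : forall a : R, closed [set W | orthant W /\ (a%:E <= S W)%E];
  ent_C2 : C2_on (interior (effdom S)) (fun W => fine (S W));
  ent_dE_pos : forall W, interior (effdom S) W ->
     0 < 'D_(ebasis 2) (fun W => fine (S W)) W
}.

Definition Sigma (Sl Sg Sv : 'rV[R]_3 -> \bar R) (Wl Wg Wv : 'rV[R]_3) : \bar R :=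
  (Sl Wl + Sg Wg + Sv Wv)%E.

(* Equilibrium entropy without phase transition (sup over the constraint set;
   -oo when the constraint set is empty). *)
Definition S_NPT (Sl Sg Sv : 'rV[R]_3 -> \bar R) (M V E Ml Mg : R) : \bar R :=
  ereal_sup [set s | exists Wl Wg Wv,
    [/\ [/\ effdom Sl Wl, effdom Sg Wg & effdom Sv Wv],
        [/\ Mof Wl = Ml, Mof Wg = Mg & Mof Wv = M - Ml - Mg],
        [/\ E = Eof Wl + Eof Wg + Eof Wv, V = Vof Wl + Vof Wv & Vof Wg = Vof Wv]
      & s = Sigma Sl Sg Sv Wl Wg Wv]].

Definition S_PT (Sl Sg Sv : 'rV[R]_3 -> \bar R) (M V E Mg : R) : \bar R :=
  ereal_sup [set s | exists Wl Wg Wv,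
    [/\ [/\ effdom Sl Wl, effdom Sg Wg & effdom Sv Wv],
        [/\ Mof Wg = Mg & M - Mg = Mof Wl + Mof Wv],
        [/\ E = Eof Wl + Eof Wg + Eof Wv, V = Vof Wl + Vof Wv & Vof Wg = Vof Wv]
      & s = Sigma Sl Sg Sv Wl Wg Wv]].

Definition dom_NPT (M V E Ml Mg : R) : Prop :=
  [/\ 0 <= M, 0 <= V, 0 <= E & [/\ 0 <= Ml, 0 <= Mg & 0 <= M - Ml - Mg]].
Definition dom_PT (M V E Mg : R) : Prop :=
  [/\ 0 <= M, 0 <= V, 0 <= E & 0 <= Mg].
End Defs.

From HB Require Import structures.
From mathcomp Require Import all_boot all_order all_algebra.
From mathcomp Require Import all_classical all_reals all_analysis.
From mathcomp Require Import ring.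
Set Implicit Arguments.
Unset Strict Implicit.
Unset Printing Implicit Defensive.
Import Order.TTheory GRing.Theory Num.Theory.
Local Open Scope ring_scope.

(* Both equilibrium entropies are suprema of the concave, 1-homogeneous total
   entropy Sigma over the states (W_l, W_g, W_v) satisfying constraints that
   are linear jointly in the states and in the parameters (M, V, E, ...).
   Scaling a feasible state by lambda gives a feasible state for the scaled
   parameters with lambda times the entropy, hence homogeneity.  A convex
   combination of feasible states for two parameter vectors is feasible for
   the combined parameters (each C_k is convex) and, by concavity of each S_k,
   has at least the combined entropy, hence concavity of the supremum.
   Neither argument uses the sign conditions dom_NPT / dom_PT. *)

Section EReal.
Variable R : realType.
Local Open Scope ereal_scope.

Lemma ge_ereal_supD (A B : set (\bar R)) (z : \bar R) :
  (forall b, B b -> b \is a fin_num) ->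
  (forall a b, A a -> B b -> a + b <= z) -> ereal_sup A + ereal_sup B <= z.
Proof.
move=> Bfin ABz.
have supAB : forall b, B b -> ereal_sup A + b <= z.
  move=> b Bb; rewrite -leeBrDr ?Bfin //.
  by apply: ge_ereal_sup => a Aa; rewrite leeBrDr ?Bfin //; exact: ABz.
case: (ereal_sup A) supAB => [r| |] supAB.
- rewrite addeC -leeBrDr //; apply: ge_ereal_sup => b Bb.
  by rewrite leeBrDr // addeC; exact: supAB.
- have [->|/set0P [b Bb]] := eqVneq B set0.
    by rewrite ereal_sup0 addeNy leNye.
  have := supAB b Bb; rewrite addye; last by have := Bfin b Bb; case: (b).
  by rewrite leye_eq => /eqP ->; rewrite leey.
- by rewrite addNye leNye.
Qed.

End EReal.

Section Entropy.
Variables (R : realType) (S : 'rV[R]_3 -> \bar R).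
Hypothesis hS : entropy_axioms S.

Lemma effdom_fin_num {W} : effdom S W -> S W \is a fin_num.
Proof.
case=> oW; rewrite fin_numE => /gt_eqF ->.
by rewrite (ent_not_pinfty hS oW).
Qed.

Lemma effdomZ (lam : R) W : 0 < lam -> effdom S W -> effdom S (lam *: W).
Proof.
move=> lam_gt0 dW; rewrite /effdom /orthant /=; split=> [i|].
  by case: dW => oW _; rewrite mxE mulr_ge0 ?oW // ltW.
by rewrite ent_homog // -(fineK (effdom_fin_num dW)) -EFinM ltNye.
Qed.

End Entropy.

Section TotalEntropy.
Variables (R : realType) (Sl Sg Sv : 'rV[R]_3 -> \bar R).
Hypotheses (hl : entropy_axioms Sl) (hg : entropy_axioms Sg)
  (hv : entropy_axioms Sv).
Local Notation Sigma := (Sigma Sl Sg Sv).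
Local Notation constraint := ('rV[R]_3 -> 'rV[R]_3 -> 'rV[R]_3 -> Prop).

Definition phase_dom (Wl Wg Wv : 'rV[R]_3) : Prop :=
  [/\ effdom Sl Wl, effdom Sg Wg & effdom Sv Wv].

Lemma phase_domZ (lam : R) Wl Wg Wv : 0 < lam -> phase_dom Wl Wg Wv ->
  phase_dom (lam *: Wl) (lam *: Wg) (lam *: Wv).
Proof. by move=> lam_gt0 [dl dg dv]; split; exact: effdomZ. Qed.

Lemma phase_dom_comb (t : R) Wl Wg Wv Wl' Wg' Wv' : 0 <= t <= 1 ->
  phase_dom Wl Wg Wv -> phase_dom Wl' Wg' Wv' ->
  phase_dom (t *: Wl + (1 - t) *: Wl') (t *: Wg + (1 - t) *: Wg')
            (t *: Wv + (1 - t) *: Wv').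
Proof.
by move=> t01 [dl dg dv] [dl' dg' dv']; split; apply: ent_dom_convex.
Qed.

Lemma Sigma_fin_num Wl Wg Wv : phase_dom Wl Wg Wv ->
  (Sigma Wl Wg Wv \is a fin_num)%E.
Proof.
by case=> dl dg dv; rewrite !fin_numD !effdom_fin_num.
Qed.

Lemma SigmaZ (lam : R) Wl Wg Wv : 0 < lam -> phase_dom Wl Wg Wv ->
  Sigma (lam *: Wl) (lam *: Wg) (lam *: Wv) = (lam%:E * Sigma Wl Wg Wv)%E.
Proof.
move=> lam_gt0 [dl dg dv].
by rewrite /Sigma !ent_homog // !muleDr ?fin_num_adde_defl ?effdom_fin_num.
Qed.

Lemma Sigma_concave (t : R) Wl Wg Wv Wl' Wg' Wv' : 0 < t < 1 ->
  phase_dom Wl Wg Wv -> phase_dom Wl' Wg' Wv' ->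
  (t%:E * Sigma Wl Wg Wv + (1 - t)%:E * Sigma Wl' Wg' Wv' <=
   Sigma (t *: Wl + (1 - t) *: Wl')%R (t *: Wg + (1 - t) *: Wg')%R
         (t *: Wv + (1 - t) *: Wv')%R)%E.
Proof.
move=> t01 [dl dg dv] [dl' dg' dv'].
have concave S W W' : entropy_axioms S -> effdom S W -> effdom S W' ->
    (t%:E * S W + (1 - t)%:E * S W' <= S (t *: W + (1 - t) *: W')%R)%E.
  by move=> hS [oW _] [oW' _]; exact: ent_concave.
rewrite /Sigma !muleDr ?fin_num_adde_defl ?effdom_fin_num //.
rewrite addeACA (addeACA (t%:E * _)%E).
by apply: leeD; [apply: leeD|]; exact: concave.
Qed.

Definition constrained_entropies (C : constraint) : set (\bar R) :=
  [set s | exists Wl Wg Wv,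
     [/\ phase_dom Wl Wg Wv, C Wl Wg Wv & s = Sigma Wl Wg Wv]].

Lemma sup_constrained_entropiesZ (lam : R) (C C' : constraint) : 0 < lam ->
  (forall Wl Wg Wv, C Wl Wg Wv -> C' (lam *: Wl) (lam *: Wg) (lam *: Wv)) ->
  (forall Wl Wg Wv, C' Wl Wg Wv ->
     C (lam^-1 *: Wl) (lam^-1 *: Wg) (lam^-1 *: Wv)) ->
  ereal_sup (constrained_entropies C')
  = (lam%:E * ereal_sup (constrained_entropies C))%E.
Proof.
move=> lam_gt0 CC' C'C; have lam_neq0 : lam != 0 by rewrite gt_eqF.
have ilam_gt0 : 0 < lam^-1 by rewrite invr_gt0.
rewrite -ereal_sup_pZl //; congr ereal_sup; apply/seteqP; split=> s.
- case=> Wl [Wg [Wv [dW /C'C CW ->]]].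
  exists (Sigma (lam^-1 *: Wl) (lam^-1 *: Wg) (lam^-1 *: Wv)).
    exists (lam^-1 *: Wl), (lam^-1 *: Wg), (lam^-1 *: Wv).
    by split; first exact: phase_domZ.
  by rewrite -SigmaZ ?scalerKV //; exact: phase_domZ.
- case=> _ [Wl [Wg [Wv [dW CW ->]]] <-].
  exists (lam *: Wl), (lam *: Wg), (lam *: Wv).
  by split; [exact: phase_domZ | exact: CC' | rewrite SigmaZ].
Qed.

Lemma sup_constrained_entropies_concave (t : R) (C C' C'' : constraint) :
  0 < t < 1 ->
  (forall Wl Wg Wv Wl' Wg' Wv', C Wl Wg Wv -> C' Wl' Wg' Wv' ->
     C'' (t *: Wl + (1 - t) *: Wl') (t *: Wg + (1 - t) *: Wg')
         (t *: Wv + (1 - t) *: Wv')) ->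
  (t%:E * ereal_sup (constrained_entropies C)
   + (1 - t)%:E * ereal_sup (constrained_entropies C')
   <= ereal_sup (constrained_entropies C''))%E.
Proof.
move=> t01 CC'C''; have /andP[t_gt0 t_lt1] := t01.
rewrite -!ereal_sup_pZl ?subr_gt0 //; apply: ge_ereal_supD.
  by move=> _ [_ [Wl [Wg [Wv [dW _ ->]]]] <-]; rewrite fin_numM ?Sigma_fin_num.
move=> _ _ [_ [Wl [Wg [Wv [dW CW ->]]]] <-] [_ [Wl' [Wg' [Wv' [dW' CW' ->]]]] <-].
apply: le_ereal_sup_tmp; eexists; last exact: Sigma_concave.
do 3 eexists; split; last by [].
- by apply: phase_dom_comb => //; rewrite !ltW.
- exact: CC'C''.
Qed.

End TotalEntropy.

Section Constraints.
Variable R : realType.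
Implicit Types (M V E Ml Mg lam t : R) (Wl Wg Wv : 'rV[R]_3).

Definition npt_constraint M V E Ml Mg Wl Wg Wv : Prop :=
  [/\ Mof Wl = Ml, Mof Wg = Mg & Mof Wv = M - Ml - Mg] /\
  [/\ E = Eof Wl + Eof Wg + Eof Wv, V = Vof Wl + Vof Wv & Vof Wg = Vof Wv].

Definition pt_constraint M V E Mg Wl Wg Wv : Prop :=
  [/\ Mof Wg = Mg & M - Mg = Mof Wl + Mof Wv] /\
  [/\ E = Eof Wl + Eof Wg + Eof Wv, V = Vof Wl + Vof Wv & Vof Wg = Vof Wv].

Lemma npt_constraintZ lam M V E Ml Mg Wl Wg Wv :
  npt_constraint M V E Ml Mg Wl Wg Wv ->
  npt_constraint (lam * M) (lam * V) (lam * E) (lam * Ml) (lam * Mg)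
    (lam *: Wl) (lam *: Wg) (lam *: Wv).
Proof.
rewrite /npt_constraint /Mof /Vof /Eof !mxE.
by case=> -[-> -> ->] [-> -> ->]; split; split; ring.
Qed.

Lemma npt_constraint_comb t M V E Ml Mg M' V' E' Ml' Mg' Wl Wg Wv Wl' Wg' Wv' :
  npt_constraint M V E Ml Mg Wl Wg Wv ->
  npt_constraint M' V' E' Ml' Mg' Wl' Wg' Wv' ->
  npt_constraint (t * M + (1 - t) * M') (t * V + (1 - t) * V')
    (t * E + (1 - t) * E') (t * Ml + (1 - t) * Ml') (t * Mg + (1 - t) * Mg')
    (t *: Wl + (1 - t) *: Wl') (t *: Wg + (1 - t) *: Wg')
    (t *: Wv + (1 - t) *: Wv').
Proof.
rewrite /npt_constraint /Mof /Vof /Eof !mxE.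
by case=> -[-> -> ->] [-> -> ->] [[-> -> ->] [-> -> ->]]; split; split; ring.
Qed.

Lemma pt_constraintZ lam M V E Mg Wl Wg Wv :
  pt_constraint M V E Mg Wl Wg Wv ->
  pt_constraint (lam * M) (lam * V) (lam * E) (lam * Mg)
    (lam *: Wl) (lam *: Wg) (lam *: Wv).
Proof.
rewrite /pt_constraint /Mof /Vof /Eof !mxE.
by case=> -[-> /eqP]; rewrite subr_eq => /eqP -> [-> -> ->]; split; split; ring.
Qed.

Lemma pt_constraint_comb t M V E Mg M' V' E' Mg' Wl Wg Wv Wl' Wg' Wv' :
  pt_constraint M V E Mg Wl Wg Wv -> pt_constraint M' V' E' Mg' Wl' Wg' Wv' ->
  pt_constraint (t * M + (1 - t) * M') (t * V + (1 - t) * V')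
    (t * E + (1 - t) * E') (t * Mg + (1 - t) * Mg')
    (t *: Wl + (1 - t) *: Wl') (t *: Wg + (1 - t) *: Wg')
    (t *: Wv + (1 - t) *: Wv').
Proof.
rewrite /pt_constraint /Mof /Vof /Eof !mxE.
case=> -[-> /eqP]; rewrite subr_eq => /eqP -> [-> -> ->].
by case=> -[-> /eqP]; rewrite subr_eq => /eqP -> [-> -> ->]; split; split; ring.
Qed.

End Constraints.

Section EquilibriumEntropies.
Variables (R : realType) (Sl Sg Sv : 'rV[R]_3 -> \bar R).

Lemma S_NPTE M V E Ml Mg : S_NPT Sl Sg Sv M V E Ml Mg =
  ereal_sup (constrained_entropies Sl Sg Sv (npt_constraint M V E Ml Mg)).
Proof.
congr ereal_sup; apply/seteqP; split=> s.
- by case=> Wl [Wg [Wv [dW mass bal ->]]]; exists Wl, Wg, Wv.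
- by case=> Wl [Wg [Wv [dW [mass bal] ->]]]; exists Wl, Wg, Wv.
Qed.

Lemma S_PTE M V E Mg : S_PT Sl Sg Sv M V E Mg =
  ereal_sup (constrained_entropies Sl Sg Sv (pt_constraint M V E Mg)).
Proof.
congr ereal_sup; apply/seteqP; split=> s.
- by case=> Wl [Wg [Wv [dW mass bal ->]]]; exists Wl, Wg, Wv.
- by case=> Wl [Wg [Wv [dW [mass bal] ->]]]; exists Wl, Wg, Wv.
Qed.

End EquilibriumEntropies.

Theorem proposition2p1 (R : realType) (Sl Sg Sv : 'rV[R]_3 -> \bar R)
  (hl : entropy_axioms Sl) (hg : entropy_axioms Sg) (hv : entropy_axioms Sv) :
  (* S_NPT: positively homogeneous of degree 1 and concave *)
  ((forall (lam : R) M V E Ml Mg, 0 < lam -> dom_NPT M V E Ml Mg ->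
      S_NPT Sl Sg Sv (lam * M) (lam * V) (lam * E) (lam * Ml) (lam * Mg)
      = (lam%:E * S_NPT Sl Sg Sv M V E Ml Mg)%E) /\
   (forall (t : R) M V E Ml Mg M' V' E' Ml' Mg', 0 < t < 1 ->
      dom_NPT M V E Ml Mg -> dom_NPT M' V' E' Ml' Mg' ->
      (t%:E * S_NPT Sl Sg Sv M V E Ml Mg + (1 - t)%:E * S_NPT Sl Sg Sv M' V' E' Ml' Mg'
       <= S_NPT Sl Sg Sv (t * M + (1 - t) * M') (t * V + (1 - t) * V')
            (t * E + (1 - t) * E') (t * Ml + (1 - t) * Ml') (t * Mg + (1 - t) * Mg'))%E))
  /\
  (* S_PT: positively homogeneous of degree 1 and concave *)
  ((forall (lam : R) M V E Mg, 0 < lam -> dom_PT M V E Mg ->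
      S_PT Sl Sg Sv (lam * M) (lam * V) (lam * E) (lam * Mg)
      = (lam%:E * S_PT Sl Sg Sv M V E Mg)%E) /\
   (forall (t : R) M V E Mg M' V' E' Mg', 0 < t < 1 ->
      dom_PT M V E Mg -> dom_PT M' V' E' Mg' ->
      (t%:E * S_PT Sl Sg Sv M V E Mg + (1 - t)%:E * S_PT Sl Sg Sv M' V' E' Mg'
       <= S_PT Sl Sg Sv (t * M + (1 - t) * M') (t * V + (1 - t) * V')
            (t * E + (1 - t) * E') (t * Mg + (1 - t) * Mg'))%E)).
Proof.
split; split.
- move=> lam M V E Ml Mg lam_gt0 _; rewrite !S_NPTE.
  apply: sup_constrained_entropiesZ => // Wl Wg Wv; first exact: npt_constraintZ.
  by move/(npt_constraintZ lam^-1); rewrite !mulKf ?gt_eqF.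
- move=> t M V E Ml Mg M' V' E' Ml' Mg' t01 _ _; rewrite !S_NPTE.
  by apply: sup_constrained_entropies_concave => // *; exact: npt_constraint_comb.
- move=> lam M V E Mg lam_gt0 _; rewrite !S_PTE.
  apply: sup_constrained_entropiesZ => // Wl Wg Wv; first exact: pt_constraintZ.
  by move/(pt_constraintZ lam^-1); rewrite !mulKf ?gt_eqF.
- move=> t M V E Mg M' V' E' Mg' t01 _ _; rewrite !S_PTE.
  by apply: sup_constrained_entropies_concave => // *; exact: pt_constraint_comb.
Qed.
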